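(* For every positive integer $n$, the class $\mathcal K_n^*$ has the Ramsey property.
   Context: For relational structures $\mathbf A,\mathbf B$ in the same language, $\binom{\mathbf B}{\mathbf A}$ denotes the set of substructures of $\mathbf B$ isomorphic to $\mathbf A$. For $k\ge 1$, $\mathbf C\to(\mathbf B)^{\mathbf A}_k$ means: for every map $c:\binom{\mathbf C}{\mathbf A}\to[k]=\{0,\dots,k-1\}$ there is $\mathbf B'\in\binom{\mathbf C}{\mathbf B}$ such that $c$ is constant on $\binom{\mathbf B'}{\mathbf A}$. A class $\mathcal K$ of finite structures has the Ramsey property if for all $k\ge1$ and all $\mathbf A,\mathbf B\in\mathcal K$ there is $\mathbf C\in\mathcal K$ with $\mathbf C\to(\mathbf B)^{\mathbf A}_k$. A directed graph $(A,E)$ ($E$ irreflexive and asymmetric) is complete multipartite if the relation ''$u=v$, or neither $E(u,v)$ nor $E(v,u)$'' is an equivalence relation on $A$; its classes are called the parts (so any two vertices in different parts are joined by exactly one directed edge, and there are no edges inside a part). $\mathcal K_n^*$ is the class of finite structures $(A,E,P_0,\dots,P_{n-1},<)$ such that $(A,E)$ is a complete multipartite directed graph with at most $n$ parts, $P_0,\dots,P_{n-1}$ are pairwise disjoint subsets of $A$ each of which is either empty or a part, every part equals some $P_i$, and $<$ is a linear order on $A$ such that every element of $P_i$ is below every element of $P_j$ whenever $i<j$. (This is the age of the expansion $n*I_\omega^*$ of the generic complete $n$-partite directed graph by unary predicates naming the parts and a convex linear order.) *)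

From mathcomp Require Import all_boot.
Set Implicit Arguments. Unset Strict Implicit. Unset Printing Implicit Defensive.

Record str (n : nat) := Str {
  car : finType;
  E : rel car;
  P : 'I_n -> pred car;
  lt : rel car }.

Arguments E {n} s.
Arguments P {n} s.
Arguments lt {n} s.

Definition nonadj n (A : str n) (u v : car A) : bool :=
  (u == v) || (~~ E A u v && ~~ E A v u).

(* the part (equivalence class of nonadj) containing x, as a predicate *)
Definition part_eq n (A : str n) (X : pred (car A)) (x : car A) : Prop :=
  forall y, X y = nonadj x y.

Definition inK n (A : str n) : Prop :=
  (forall x, ~~ E A x x) /\ (forall x y, E A x y -> ~~ E A y x) /\
  (* complete multipartite: nonadj is an equivalence relation *)
  (forall x : car A, nonadj x x) /\ (forall x y : car A, nonadj x y = nonadj y x) /\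
  (forall x y z : car A, nonadj x y -> nonadj y z -> nonadj x z) /\
  (forall (i j : 'I_n) x, i != j -> P A i x -> ~~ P A j x) /\
  (forall i : 'I_n, (forall x, ~~ P A i x) \/ exists x, part_eq (P A i) x) /\
  (* every part equals some P_i (hence at most n parts) *)
  (forall x, exists i : 'I_n, part_eq (P A i) x) /\
  (forall x, ~~ lt A x x) /\
  (forall x y z, lt A x y -> lt A y z -> lt A x z) /\
  (forall x y, x != y -> lt A x y || lt A y x) /\
  (forall (i j : 'I_n) x y, (i < j)%N -> P A i x -> P A j y -> lt A x y).

Definition is_emb n (A B : str n) (f : car A -> car B) : Prop :=
  injective f /\
  (forall x y, E B (f x) (f y) = E A x y) /\
  (forall i x, P B i (f x) = P A i x) /\
  (forall x y, lt B (f x) (f y) = lt A x y).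

(* S is (the universe of) a member of binom(C, A) *)
Definition copy n (C A : str n) (S : {set car C}) : Prop :=
  exists f : car A -> car C, is_emb f /\ f @: setT = S.

Definition arrow n (C B A : str n) (k : nat) : Prop :=
  forall c : {set car C} -> 'I_k,
    exists S' : {set car C}, copy B S' /\
      exists col : 'I_k, forall S : {set car C},
        S \subset S' -> copy A S -> c S = col.

Definition ramsey_property n (K : str n -> Prop) : Prop :=
  forall k : nat, (0 < k)%N -> forall A B : str n, K A -> K B ->
    exists C : str n, K C /\ arrow C B A k.

From mathcomp Require Import all_boot.
From Stdlib Require Import Classical.
Set Implicit Arguments. Unset Strict Implicit. Unset Printing Implicit Defensive.

(* The Ramsey property of K_n^* (ordered complete n-partite directed graphs
   with named parts and convex order), by the Nesetril-Rodl partite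
   construction.

   A structure of K_n^* is encoded as a sorted structure: points sorted into
   n parts, a linear order refining the order of parts, and "arcs" recording
   which cross-part edges point upwards. *)

Definition strict_total (T : finType) (lt : rel T) :=
  [/\ irreflexive lt, transitive lt & forall x y, x != y -> lt x y || lt y x].

Lemma strict_total_asym (T : finType) (lt : rel T) x y :
  strict_total lt -> lt x y -> lt y x = false.
Proof. by case=> irr tr _ xy; apply/negP=> /(tr _ _ _ xy); rewrite irr. Qed.

(* The order of enumeration of a finite type; it breaks ties in the
   lexicographic orders built below. *)
Definition enum_lt (T : finType) : rel T := fun x y => enum_rank x < enum_rank y.

Lemma strict_total_enum_lt (T : finType) : strict_total (@enum_lt T).
Proof.
split=> [x|y x z|x y nxy]; rewrite /enum_lt ?ltnn //; first exact: ltn_trans.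
by rewrite -neq_ltn; apply: contra nxy => /eqP/val_inj/enum_rank_inj ->.
Qed.

Definition lex_lt (T : Type) (T1 : eqType) (f : T -> T1) (lt1 : rel T1) (lt2 : rel T) : rel T :=
  fun x y => lt1 (f x) (f y) || (f x == f y) && lt2 x y.

Lemma strict_total_lex (T T1 : finType) (f : T -> T1) (lt1 : rel T1) (lt2 : rel T) :
  strict_total lt1 ->
  irreflexive lt2 ->
  (forall x y z, f x = f y -> f y = f z -> lt2 x y -> lt2 y z -> lt2 x z) ->
  (forall x y, f x = f y -> x != y -> lt2 x y || lt2 y x) ->
  strict_total (lex_lt f lt1 lt2).
Proof.
move=> [irr tr tot] irr2 tr2 tot2; rewrite /lex_lt; split.
- by move=> x; rewrite irr eqxx irr2.
- move=> y x z; case/orP=> [h1|/andP[/eqP e1 h1]]; case/orP=> [h2|/andP[/eqP e2 h2]].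
  + by rewrite (tr _ _ _ h1 h2).
  + by rewrite -e2 h1.
  + by rewrite e1 h2.
  + by rewrite e1 e2 eqxx (tr2 _ _ _ e1 e2 h1 h2) orbT.
- move=> x y nxy; case: (eqVneq (f x) (f y)) => e.
    by rewrite e irr /=; case/orP: (tot2 _ _ e nxy) => ->; rewrite ?orbT.
  by case/orP: (tot _ _ e) => ->; rewrite ?orbT.
Qed.

Lemma strict_total_prod (T1 T2 : finType) (lt1 : rel T1) (lt2 : rel T2) :
  strict_total lt1 -> strict_total lt2 -> strict_total (lex_lt fst lt1 (relpre snd lt2)).
Proof.
move=> s1 [irr tr tot]; apply: strict_total_lex => // [x|x y z _ _|[x1 x2] [y1 y2] /= e].
- exact: irr.
- exact: tr.
- by rewrite e xpair_eqE eqxx; apply: tot.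
Qed.

Definition sum_lt (T1 T2 : Type) (lt1 : rel T1) (lt2 : rel T2) : rel (T1 + T2) :=
  fun u v => match u, v with
  | inl x, inl y => lt1 x y | inr x, inr y => lt2 x y
  | inl _, inr _ => true | inr _, inl _ => false end.

Lemma strict_total_sum (T1 T2 : finType) (lt1 : rel T1) (lt2 : rel T2) :
  strict_total lt1 -> strict_total lt2 -> strict_total (sum_lt lt1 lt2).
Proof.
move=> [irr1 tr1 tot1] [irr2 tr2 tot2]; split.
- by case=> x /=; [apply: irr1 | apply: irr2].
- by case=> [y|y] [x|x] [z|z] //=; [apply: tr1 | apply: tr2].
- case=> [x|x] [y|y] //= ne; [apply: tot1 | apply: tot2]; apply: contra ne => /eqP -> //.
Qed.

Section Rank.
Variables (T : finType) (lt : rel T).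
Hypothesis ltT : strict_total lt.

Definition rank (S : {set T}) x := #|[set y in S | lt y x]|.

Lemma rank_lt (S : {set T}) x y : x \in S -> lt x y -> rank S x < rank S y.
Proof.
case: ltT => irr tr _ xS xy; apply: proper_card; apply/properP; split.
  by apply/subsetP=> z; rewrite !inE => /andP[-> zx]; rewrite (tr _ _ _ zx xy).
by exists x; rewrite !inE ?xS ?xy ?irr.
Qed.

Lemma rank_ltE (S : {set T}) x y : x \in S -> y \in S -> (rank S x < rank S y) = lt x y.
Proof.
move=> xS yS; apply/idP/idP=> [h|]; last exact: rank_lt.
have nxy : x != y by apply: contraTneq h => ->; rewrite ltnn.
case: ltT => _ _ /(_ _ _ nxy)/orP[//|/(rank_lt yS)].
by rewrite ltnNge => /negP; rewrite ltnW.
Qed.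

Lemma rank_inj (S : {set T}) : {in S &, injective (rank S)}.
Proof.
move=> x y xS yS e; apply: contraTeq isT => nxy; have [_ _ tot] := ltT.
by case/orP: (tot _ _ nxy); rewrite -(rank_ltE (S := S)) // e ltnn.
Qed.

Lemma rank_bound (S : {set T}) x : x \in S -> rank S x < #|S|.
Proof.
case: ltT => irr _ _ xS; apply: proper_card; apply/properP; split.
  by apply/subsetP=> z; rewrite !inE => /andP[].
by exists x => //; rewrite !inE irr andbF.
Qed.

Lemma rank_surj (S : {set T}) r : r < #|S| -> exists2 x, x \in S & rank S x = r.
Proof.
move=> rS; have u : uniq (map (rank S) (enum S)).
  by rewrite map_inj_in_uniq ?enum_uniq // => x y; rewrite !mem_enum; apply: rank_inj.
have sub : {subset map (rank S) (enum S) <= iota 0 #|S|}.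
  by move=> z /mapP[x]; rewrite mem_enum => xS ->; rewrite mem_iota add0n rank_bound.
have sz : size (iota 0 #|S|) <= size (map (rank S) (enum S)).
  by rewrite size_map size_iota -cardE.
have [_ eq] := uniq_min_size u sub sz.
have : r \in iota 0 #|S| by rewrite mem_iota.
by rewrite -eq => /mapP[x]; rewrite mem_enum => xS ->; exists x.
Qed.

Lemma rank0_least (S : {set T}) x y : x \in S -> y \in S -> rank S x = 0 -> y != x -> lt x y.
Proof.
move=> xS yS r0 yx; rewrite -(rank_ltE (S := S)) // r0 lt0n; apply: contra yx => /eqP r0'.
by apply/eqP; apply: (rank_inj yS xS); rewrite r0 r0'.
Qed.

Lemma rank0_sub (S W : {set T}) x z : S \subset W -> x \in S -> rank W x = 0 ->
  z \in S -> rank S z = 0 -> z = x.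
Proof.
move=> SW xS rx zS rz; apply: contraTeq isT => zx.
have xz : lt x z by apply: rank0_least (subsetP SW _ xS) (subsetP SW _ zS) rx zx.
have zx' : lt z x by apply: rank0_least zS xS rz _; rewrite eq_sym.
by rewrite (strict_total_asym ltT xz) in zx'.
Qed.

(* The element of rank [r] in [S] ([t0] if there is none). *)
Variable t0 : T.
Definition elem (S : {set T}) r := odflt t0 [pick y in S | rank S y == r].

Lemma elemP (S : {set T}) r : r < #|S| -> elem S r \in S /\ rank S (elem S r) = r.
Proof.
move=> rS; rewrite /elem; case: pickP => [y /andP[yS /eqP ->] //|none].
by have [y yS ry] := rank_surj rS; move: (none y); rewrite yS ry eqxx.
Qed.

Lemma elem_rank (S : {set T}) x : x \in S -> elem S (rank S x) = x.
Proof.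
move=> xS; have [eS reS] := elemP (rank_bound xS).
exact: rank_inj reS.
Qed.

Lemma elem_ltE (S : {set T}) r r' : r < #|S| -> r' < #|S| ->
  lt (elem S r) (elem S r') = (r < r').
Proof. by move=> /elemP[s1 r1] /elemP[s2 r2]; rewrite -(rank_ltE (S := S)) // r1 r2. Qed.

Lemma elem_inj (S : {set T}) r r' : r < #|S| -> r' < #|S| -> elem S r = elem S r' -> r = r'.
Proof. by move=> /elemP[_ r1] /elemP[_ r2] e; rewrite -r1 -r2 e. Qed.

End Rank.

Lemma elem_image (X T : finType) (ltX : rel X) (lt : rel T) (t0 : T) (phi : X -> T) x :
  strict_total ltX -> strict_total lt -> injective phi ->
  (forall x y, lt (phi x) (phi y) = ltX x y) ->
  elem lt t0 (phi @: setT) (rank ltX setT x) = phi x.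
Proof.
move=> sX sT inj hom; rewrite -[in RHS](elem_rank sT t0 (imset_f phi (in_setT x))).
congr elem; rewrite /rank -(card_imset _ inj); apply: eq_card => y.
rewrite !inE; apply/imsetP/idP.
  by case=> x'; rewrite !inE /= => h ->; rewrite hom h imset_f ?inE.
by case/andP=> /imsetP[x' _ ->]; rewrite hom => h; exists x'; rewrite ?inE.
Qed.

Lemma pigeonhole (T O : finType) (f : T -> O) (U : {set T}) b :
  0 < #|O| -> 0 < b -> #|O| * b <= #|U| -> exists o, b <= #|[set x in U | f x == o]|.
Proof.
move=> O0 b0 h; apply/existsP; apply: contraT => /existsPn small.
have : #|U| <= #|O| * b.-1.
  rewrite -sum1_card (partition_big f xpredT) //= -sum_nat_const.
  apply: leq_sum => o _; rewrite sum1dep_card -ltnS prednK //; move: (small o).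
  by rewrite -ltnNge; congr (_ < _); apply: eq_card => x; rewrite !inE.
move/(leq_trans h); rewrite leq_mul2l -[b in b <= _](prednK b0) ltnn orbF.
by rewrite eqn0Ngt O0.
Qed.

Definition homogeneous (T : finType) (K : Type) a (c : {set T} -> K) (U : {set T}) :=
  forall S1 S2 : {set T}, S1 \subset U -> S2 \subset U -> #|S1| = a -> #|S2| = a ->
    c S1 = c S2.

Definition ramsey_bound (K : finType) a b N := forall (T : finType) (W : {set T}),
  N <= #|W| -> forall c : {set T} -> K,
  exists2 U : {set T}, U \subset W & b <= #|U| /\ homogeneous a c U.

Definition end_homogeneous (T : finType) (K : Type) a (c : {set T} -> K) (U : {set T}) :=
  exists f : T -> option K, forall (S : {set T}) x, S \subset U -> #|S| = a.+1 ->
    x \in S -> rank (@enum_lt T) S x = 0 -> Some (c S) = f x.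

Section EndHomogeneous.
Variables (K : finType) (a : nat).
Hypothesis ramsey_a : forall b, exists N, ramsey_bound K a b N.

(* Large end-homogeneous sets: remove the least element [x] of [W], make the
   rest homogeneous for the colouring [S |-> c (x |: S)], recurse inside. *)
Lemma end_homogeneous_subset m : exists N, forall (T : finType) (W : {set T}),
  N <= #|W| -> forall c : {set T} -> K,
  exists2 U : {set T}, U \subset W & m <= #|U| /\ end_homogeneous a c U.
Proof.
elim: m => [|m [Nm HNm]].
  exists 0 => T W _ c; exists set0; rewrite ?sub0set //; split=> //.
  by exists (fun=> None) => S x /subset_leq_card; rewrite cards0 leqn0 => /eqP ->.
have [N' HN'] := ramsey_a Nm; exists N'.+1 => T W NW c.
have ltT := strict_total_enum_lt T.
have [x xW rx] := rank_surj ltT (leq_ltn_trans (leq0n _) NW).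
have NW' : N' <= #|W :\ x| by move: NW; rewrite (cardsD1 x W) xW.
have [Y YW [NY hY]] := HN' T _ NW' (fun S => c (x |: S)).
have [U' U'Y [mU' [f' hf']]] := HNm T Y NY c.
have U'W : U' \subset W :\ x := subset_trans U'Y YW.
have xU' : x \notin U' by apply/negP=> /(subsetP U'W); rewrite !inE eqxx.
have UW : x |: U' \subset W by rewrite subUset sub1set xW (subset_trans U'W) ?subD1set.
pose kx := if [pick S0 : {set T} | (S0 \subset Y) && (#|S0| == a)] is Some S0
           then Some (c (x |: S0)) else None.
exists (x |: U') => //; split; first by rewrite cardsU1 xU'.
exists (fun y => if y == x then kx else f' y) => S z SU cS zS rz.
case: (boolP (x \in S)) => xS.
  rewrite (rank0_sub ltT (subset_trans SU UW) xS rx zS rz) eqxx.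
  have SxY : S :\ x \subset Y.
    apply/subsetP=> y; rewrite !inE => /andP[yx /(subsetP SU)].
    by rewrite !inE (negPf yx) => /(subsetP U'Y).
  have cSx : #|S :\ x| = a by move: cS; rewrite (cardsD1 x S) xS => -[].
  rewrite /kx; case: pickP => [S0 /andP[S0Y /eqP cS0]|/(_ (S :\ x))]; last first.
    by rewrite SxY cSx eqxx.
  by rewrite -{1}(setD1K xS); congr Some; apply: hY.
have -> : (z == x) = false by apply: contraNF xS => /eqP <-.
apply: hf' => //; apply/subsetP=> y yS; move: (subsetP SU y yS).
by rewrite !inE => /orP[/eqP yx|//]; move: xS; rewrite -yx yS.
Qed.

End EndHomogeneous.

Theorem ramsey_sets (K : finType) a b : exists N, ramsey_bound K a b N.
Proof.
elim: a b => [|a IHa] b.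
  exists b => T W bW c; exists W => //; split=> // S1 S2 _ _ /eqP.
  by rewrite cards_eq0 => /eqP -> /eqP; rewrite cards_eq0 => /eqP ->.
have [N HN] := end_homogeneous_subset IHa (#|{: option K}| * b.+1).
exists N => T W NW c; have ltT := strict_total_enum_lt T.
have [U UW [mU [f hf]]] := HN T W NW c.
have O0 : 0 < #|{: option K}| by apply/card_gt0P; exists None.
have [o ho] := pigeonhole f O0 (ltn0Sn b) mU.
have subU : [set y in U | f y == o] \subset U by apply/subsetP=> y; rewrite inE => /andP[].
exists [set y in U | f y == o]; first exact: subset_trans UW.
split=> [|S1 S2 S1V S2V c1 c2]; first exact: ltnW.
have [z1 z1S r1] := rank_surj ltT (ltac:(by rewrite c1) : 0 < #|S1|).
have [z2 z2S r2] := rank_surj ltT (ltac:(by rewrite c2) : 0 < #|S2|).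
have := hf S1 z1 (subset_trans S1V subU) c1 z1S r1.
have := hf S2 z2 (subset_trans S2V subU) c2 z2S r2.
move: (subsetP S1V z1 z1S) (subsetP S2V z2 z2S); rewrite !inE.
by move=> /andP[_ /eqP->] /andP[_ /eqP->] <- [].
Qed.

Lemma strict_total_ltn M : strict_total (fun i j : 'I_M => i < j).
Proof. by split=> [i|j i k|i j]; [rewrite ltnn | apply: ltn_trans | rewrite neq_ltn]. Qed.

(* A structure of [K_n^*] is encoded by keeping its edges directed upwards
   (every cross-part pair is an edge, so edges directed downwards are
   recovered as the non-arcs). *)
Record sstr (n : nat) := SStr { pts : finType; part : pts -> 'I_n; arc : rel pts; prec : rel pts }.
Arguments part {n} s.
Arguments arc {n} s.
Arguments prec {n} s.

Definition sorted_wf n (S : sstr n) :=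
  [/\ strict_total (prec S), (forall x y, part S x < part S y -> prec S x y) &
      (forall x y, arc S x y -> part S x < part S y)].

Lemma prec_parts n (S : sstr n) x y : sorted_wf S -> part S x != part S y ->
  prec S x y = (part S x < part S y).
Proof.
case=> sS mon _; rewrite neq_ltn => /orP[h|h]; first by rewrite h mon.
by rewrite ltnNge ltnW // (strict_total_asym sS (mon _ _ h)).
Qed.

Definition semb n (A B : sstr n) (f : pts A -> pts B) :=
  [/\ injective f, (forall x y, arc B (f x) (f y) = arc A x y),
      (forall x, part B (f x) = part A x) & (forall x y, prec B (f x) (f y) = prec A x y)].

Lemma semb_id n (A : sstr n) : semb (@id (pts A)).
Proof. by split. Qed.

Lemma semb_comp n (A B C : sstr n) (f : pts A -> pts B) (g : pts B -> pts C) :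
  semb f -> semb g -> semb (g \o f).
Proof.
case=> fi fr fs fl [gi gr gs gl]; split=> [x y /gi /fi //|x y|x|x y] /=.
- by rewrite gr fr.
- by rewrite gs fs.
- by rewrite gl fl.
Qed.

Lemma semb_factor n (A B C : sstr n) (G : pts B -> pts C) (f : pts A -> pts C)
    (f' : pts A -> pts B) :
  semb G -> semb f -> (forall a, G (f' a) = f a) -> semb f'.
Proof.
case=> gi gr gs gl [fi fr fs fl] e; split=> [x y h|x y|x|x y].
- by apply: fi; rewrite -!e h.
- by rewrite -gr !e fr.
- by rewrite -gs e fs.
- by rewrite -gl !e fl.
Qed.

Lemma semb_ext n (A B : sstr n) (f g : pts A -> pts B) : f =1 g -> semb f -> semb g.
Proof. by move=> e fe; apply: (semb_factor (semb_id B) fe). Qed.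

Definition order_emb n (A : sstr n) (D : Type) (partD : D -> 'I_n) (ltD : rel D)
    (f : pts A -> D) :=
  [/\ injective f, (forall x, partD (f x) = part A x) & (forall x y, ltD (f x) (f y) = prec A x y)].

(* The base order: [M] points in each part, ordered part by part. *)
Definition base_lt n M : rel ('I_n * 'I_M) :=
  lex_lt fst (fun i j : 'I_n => i < j) (relpre snd (fun i j : 'I_M => i < j)).
Arguments base_lt : clear implicits.

Lemma strict_total_base n M : strict_total (base_lt n M).
Proof. exact: strict_total_prod (strict_total_ltn n) (strict_total_ltn M). Qed.

Section OrderedRamsey.
Variables (n N : nat).
Local Notation ltI := (fun i j : 'I_N.+1 => i < j).

Definition slot (U : {set 'I_N.+1}) (X : sstr n) x := elem ltI ord0 U (rank (prec X) setT x).
Arguments slot : clear implicits.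
Definition place (U : {set 'I_N.+1}) (X : sstr n) x := (part X x, slot U X x).
Arguments place : clear implicits.

Variables (U : {set 'I_N.+1}) (X : sstr n).
Hypotheses (wX : sorted_wf X) (XU : #|pts X| <= #|U|).

Lemma slot_bound x : rank (prec X) setT x < #|U|.
Proof. by case: wX => sX _ _; apply: leq_trans XU; rewrite -cardsT rank_bound ?inE. Qed.

Lemma slot_in x : slot U X x \in U.
Proof. by have [] := elemP (strict_total_ltn N.+1) ord0 (slot_bound x). Qed.

Lemma slot_ltE x y : slot U X x < slot U X y = prec X x y.
Proof.
case: wX => sX _ _; rewrite (elem_ltE (strict_total_ltn N.+1)) ?slot_bound //.
by rewrite rank_ltE ?inE.
Qed.

Lemma slot_inj : injective (slot U X).
Proof.
case: wX => sX _ _ x y /(elem_inj (strict_total_ltn N.+1)).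
by move=> /(_ (slot_bound x) (slot_bound y)); apply: rank_inj; rewrite ?inE.
Qed.

Lemma place_order_emb : order_emb fst (base_lt n N.+1) (place U X).
Proof.
split=> [x y [_ /slot_inj //]|//|x y].
rewrite /base_lt /lex_lt /=; case: (eqVneq (part X x) (part X y)) => e.
  by rewrite e ltnn slot_ltE.
by rewrite prec_parts // orbF.
Qed.

Lemma place_restrict (A : sstr n) (g : pts A -> pts X) :
  sorted_wf A -> order_emb (part X) (prec X) g ->
  let Z := (slot U X \o g) @: setT in
  [/\ [ffun a => place U X (g a)] = [ffun a => place Z A a], Z \subset U & #|Z| = #|pts A|].
Proof.
case=> sA _ _ [gi gp gl] Z.
have phi_inj : injective (slot U X \o g) by move=> x y /slot_inj /gi.
have phi_lt x y : ltI (slot U X (g x)) (slot U X (g y)) = prec A x y by rewrite slot_ltE gl.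
split; last by rewrite card_imset // cardsT.
- apply/ffunP=> a; rewrite !ffunE /place /slot gp; congr pair.
  by rewrite (elem_image ord0 a sA (strict_total_ltn N.+1) phi_inj phi_lt).
- by apply/subsetP=> _ /imsetP[a _ ->]; apply: slot_in.
Qed.

End OrderedRamsey.
Arguments place {n N} U X x.

(* Apply the
   Ramsey theorem for [#|A|]-subsets of ['I_N.+1]: a subset fixes a placement
   of [A] (ranks go to elements of the subset, parts are kept). *)
Lemma ordered_ramsey n (A B : sstr n) (K : finType) : sorted_wf A -> sorted_wf B ->
  exists M, forall chi : {ffun pts A -> 'I_n * 'I_M.+1} -> K,
  exists beta : pts B -> 'I_n * 'I_M.+1, order_emb fst (base_lt n M.+1) beta /\
    forall g g' : pts A -> pts B, order_emb (part B) (prec B) g ->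
      order_emb (part B) (prec B) g' ->
      chi [ffun x => beta (g x)] = chi [ffun x => beta (g' x)].
Proof.
move=> wA wB; have [N HN] := ramsey_sets K #|pts A| #|pts B|.
exists N => chi; have NW : N <= #|[set: 'I_N.+1]| by rewrite cardsT card_ord.
have [U _ [BU hU]] := HN _ _ NW (fun Z => chi [ffun a => place Z A a]).
exists (place U B); split=> [|g g' hg hg']; first exact: place_order_emb.
have [-> ZU cZ] := place_restrict wB BU wA hg.
have [-> Z'U cZ'] := place_restrict wB BU wA hg'.
exact: hU.
Qed.

(* The combinatorial line with template [rho] (wildcards are [None]) at [s]. *)
Definition line (I S : finType) (rho : {ffun I -> option S}) (s : S) : {ffun I -> S} :=
  [ffun i => odflt s (rho i)].

Definition hj_dim (S K I : finType) := forall c : {ffun I -> S} -> K,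
  exists rho : {ffun I -> option S}, (exists t, rho t = None) /\
    forall s s', c (line rho s) = c (line rho s').

Definition catw (I1 I2 : finType) (T : Type) (u : {ffun I1 -> T}) (v : {ffun I2 -> T}) :
  {ffun (I1 + I2)%type -> T} := [ffun x => match x with inl a => u a | inr b => v b end].

Lemma line_cat (I1 I2 S : finType) (r1 : {ffun I1 -> option S}) (r2 : {ffun I2 -> option S}) s :
  line (catw r1 r2) s = catw (line r1 s) (line r2 s).
Proof. by apply/ffunP=> [[a|b]]; rewrite !ffunE. Qed.

Lemma line_const (I S : finType) (u : {ffun I -> S}) s : line [ffun i => Some (u i)] s = u.
Proof. by apply/ffunP=> i; rewrite !ffunE. Qed.

Lemma hales_jewett_small (S K : finType) : #|S| <= 1 -> exists (I : finType) (t0 : I), hj_dim S K I.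
Proof.
move=> h; exists unit, tt => c; exists [ffun _ => None]; split=> [|s s'].
  by exists tt; rewrite ffunE.
by move/card_le1_eqP: h => /(_ s s'); rewrite !inE => /(_ isT isT) ->.
Qed.

Section ColourFocusing.
Variables (S K : finType) (z : S).
Local Notation S' := {x : S | x != z}.
Hypothesis hj_S' : forall K' : finType, exists (I : finType) (t0 : I), hj_dim S' K' I.
Variable s0 : S'.

(* [r]-focused lines for [c]: [r] lines, monochromatic off [z] in [r] distinct
   colours, all ending at [z] in the same word [F] of yet another colour --
   unless [c] already has a monochromatic line. *)
Definition focused r (I : finType) := forall c : {ffun I -> S} -> K,
  (exists rho : {ffun I -> option S}, (exists t, rho t = None) /\
      forall s s', c (line rho s) = c (line rho s')) \/
  exists F : {ffun I -> S}, exists Col : {set K}, [/\ #|Col| = r, c F \notin Col &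
    forall k, k \in Col -> exists rho : {ffun I -> option S}, [/\ (exists t, rho t = None),
      line rho z = F & forall s' : S', c (line rho (val s')) = k]].

Lemma focused0 : focused 0 unit.
Proof.
move=> c; right; exists [ffun _ => z], set0; split; rewrite ?cards0 ?inE //.
by move=> k; rewrite inE.
Qed.

(* One more focused line: apply the Hales-Jewett theorem for [S'] in a new
   block of coordinates, then the [r]-focusing in the old block. *)
Lemma focused_step r (I1 : finType) : focused r I1 ->
  exists (I : finType) (t0 : I), focused r.+1 I.
Proof.
move=> H1; have [I2 [t2 H2]] := hj_S' {ffun {ffun I1 -> S} -> K}.
exists (I2 + I1)%type, (inl t2) => c.
pose c2 (u : {ffun I2 -> S'}) := [ffun v => c (catw [ffun a => val (u a)] v)].
have [rho2 [[t rt] m2]] := H2 c2.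
pose lrho2 := [ffun a => omap val (rho2 a)].
pose c1 v := c (catw (line lrho2 (val s0)) v).
have c1E (s' : S') v : c (catw (line lrho2 (val s')) v) = c1 v.
  have liftE (s1 : S') : [ffun a => val (line rho2 s1 a)] = line lrho2 (val s1).
    by apply/ffunP=> a; rewrite !ffunE; case: (rho2 a).
  have := congr1 (fun f : {ffun {ffun I1 -> S} -> K} => f v) (m2 s' s0).
  by rewrite /c2 !ffunE !liftE.
have [[rho1 [[t1 rt1] m1]]|[F [Col [cCol nF HCol]]]] := H1 c1.
  left; exists (catw [ffun a => Some (line lrho2 (val s0) a)] rho1).
  split=> [|s s']; first by exists (inr t1); rewrite ffunE.
  by rewrite !line_cat !line_const; apply: m1.
pose F' := catw (line lrho2 z) F.
have lines k : k \in c1 F |: Col -> exists rho : {ffun (I2 + I1)%type -> option S},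
    [/\ (exists t, rho t = None), line rho z = F' & forall s' : S', c (line rho (val s')) = k].
  rewrite !inE => /predU1P[->|kC].
    exists (catw lrho2 [ffun b => Some (F b)]).
    split=> [|//|s']; first by exists (inl t); rewrite !ffunE rt.
    - by rewrite line_cat line_const.
    - by rewrite line_cat line_const c1E.
  have [rk [[tk rtk] lk ck]] := HCol k kC.
  exists (catw lrho2 rk); split=> [|//|s']; first by exists (inr tk); rewrite !ffunE rtk.
  - by rewrite line_cat lk.
  - by rewrite line_cat c1E ck.
case: (boolP (c F' \in c1 F |: Col)) => hF.
  left; have [rho [ex lz cs]] := lines _ hF; exists rho; split=> //.
  suff all_k s : c (line rho s) = c F' by move=> s s'; rewrite !all_k.
  case: (eqVneq s z) => [->|nz]; first by rewrite lz.
  exact: (cs (exist _ s nz)).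
by right; exists F', (c1 F |: Col); rewrite cardsU1 nF cCol.
Qed.

(* With [#|K|]-focused lines, [F] would need a colour outside [K]. *)
Lemma hales_jewett_step : exists (I : finType) (t0 : I), hj_dim S K I.
Proof.
have foc r : exists (I : finType) (t0 : I), focused r I.
  elim: r => [|r [I [_ HI]]]; [exists unit, tt; exact: focused0 | exact: focused_step HI].
have [I [t0 H]] := foc #|K|; exists I, t0 => c.
have [//|[F [Col [cCol nF _]]]] := H c.
have : Col \subset [set~ c F].
  by apply/subsetP=> k kC; rewrite !inE; apply: contraNneq nF => <-.
have K0 : 0 < #|K| by apply/card_gt0P; exists (c F).
by move/subset_leq_card; rewrite cardsC1 cCol; case: #|K| K0 => // k _; rewrite ltnn.
Qed.

End ColourFocusing.

Theorem hales_jewett (S K : finType) : exists (I : finType) (t0 : I), hj_dim S K I.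
Proof.
move: {2}#|S| (erefl #|S|) K => m; elim: m S => [|m IH] S cS K.
  by apply: hales_jewett_small; rewrite cS.
case: m IH cS => [|m] IH cS; first by apply: hales_jewett_small; rewrite cS.
have /card_gt0P[z _] : 0 < #|S| by rewrite cS.
have cS' : #|{: {x : S | x != z}}| = m.+1.
  by rewrite card_sig -[m.+1]/(m.+2.-1) -cS -(cardC1 z); apply: eq_card => x; rewrite !inE.
have /card_gt0P[s0 _] : 0 < #|{: {x : S | x != z}}| by rewrite cS'.
by apply: hales_jewett_step s0 => K'; apply: IH.
Qed.

(* Boolean form of [semb] on finite functions, to form finite types of embeddings. *)
Definition sembb n (A B : sstr n) (f : {ffun pts A -> pts B}) :=
  [&& injectiveb f, [forall x, forall y, arc B (f x) (f y) == arc A x y],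
      [forall x, part B (f x) == part A x] & [forall x, forall y, prec B (f x) (f y) == prec A x y]].

Lemma sembP n (A B : sstr n) (f : {ffun pts A -> pts B}) : reflect (semb f) (sembb f).
Proof.
apply: (iffP and4P) => [[/injectiveP i /forallP r /forallP s /forallP l]|[i r s l]].
  split=> // [x y|x|x y]; apply/eqP; [exact: (forallP (r x)) | exact: s | exact: (forallP (l x))].
split; first exact/injectiveP.
- by apply/forallP=> x; apply/forallP=> y; rewrite r.
- by apply/forallP=> x; rewrite s.
- by apply/forallP=> x; apply/forallP=> y; rewrite l.
Qed.

Lemma strict_total_pre (U T : finType) (f : U -> T) (lt : rel T) :
  injective f -> strict_total lt -> strict_total (relpre f lt).
Proof.
move=> fi [irr tr tot]; split=> [x|y x z|x y nxy] /=; first exact: irr.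
  exact: tr.
by apply: tot; apply: contra nxy => /eqP/fi ->.
Qed.

Definition word_lt (I T : finType) (lt : rel T) : rel {ffun I -> T} := fun w1 w2 =>
  [exists t, lt (w1 t) (w2 t) && [forall s, enum_lt s t ==> (w1 s == w2 s)]].

Lemma strict_total_word (I T : finType) (lt : rel T) :
  strict_total lt -> strict_total (word_lt (I := I) lt).
Proof.
case=> irr tr tot; split.
- by move=> w; apply/negbTE/existsPn=> t; rewrite irr.
- move=> y x z /existsP[t1 /andP[h1 /forallP e1]] /existsP[t2 /andP[h2 /forallP e2]].
  have {}e1 s : enum_lt s t1 -> x s = y s by move=> hs; apply/eqP/(implyP (e1 s)).
  have {}e2 s : enum_lt s t2 -> y s = z s by move=> hs; apply/eqP/(implyP (e2 s)).
  apply/existsP; case: (ltngtP (enum_rank t1) (enum_rank t2)) => c.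
  + exists t1; rewrite -(e2 t1 c) h1; apply/forallP=> s; apply/implyP=> hs.
    by rewrite e1 // e2 //; apply: ltn_trans hs c.
  + exists t2; rewrite (e1 t2 c) h2; apply/forallP=> s; apply/implyP=> hs.
    by rewrite e1 ?e2 //; apply: ltn_trans hs c.
  + have ct : t1 = t2 by apply/enum_rank_inj/val_inj.
    subst t2; exists t1; rewrite (tr _ _ _ h1 h2); apply/forallP=> s; apply/implyP=> hs.
    by rewrite e1 ?e2.
- move=> x y nxy; have /existsP[t1 d1] : [exists t, x t != y t].
    by apply: contraR nxy => /existsPn H; apply/eqP/ffunP=> t; apply/eqP; rewrite -[_ == _]negbK.
  have [tm dtm mintm] := arg_minnP (P := fun t => x t != y t) (fun t => enum_rank t) d1.
  have eqs s : enum_lt s tm -> x s == y s.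
    by apply: contraTT => ds; rewrite /enum_lt -leqNgt mintm.
  case/orP: (tot _ _ dtm) => h; apply/orP; [left | right]; apply/existsP; exists tm;
    rewrite h; apply/forallP=> s; apply/implyP=> /eqs //; by rewrite eq_sym.
Qed.

Lemma word_lt_diff (I T : finType) (lt : rel T) (w1 w2 : {ffun I -> T}) x y (Z : pred I) :
  strict_total lt -> (exists t, Z t) -> (forall t, Z t -> w1 t = x /\ w2 t = y) ->
  (forall t, ~~ Z t -> w1 t = w2 t) -> word_lt lt w1 w2 = lt x y.
Proof.
case=> irr _ _ [t0 Zt0] onZ offZ; apply/existsP/idP => [[t /andP[h _]]|xy].
  case: (boolP (Z t)) => [/onZ[<- <-] //|/offZ e]; by rewrite e irr in h.
have [tm Ztm mintm] := arg_minnP (P := Z) (fun t => enum_rank t) Zt0.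
exists tm; have [-> ->] := onZ _ Ztm; rewrite xy; apply/forallP=> s; apply/implyP=> hs.
by rewrite offZ // ; apply: contraTN hs => /mintm; rewrite /enum_lt -leqNgt.
Qed.

Section Partite.
Variables (n : nat) (D : finType) (partD : D -> 'I_n) (ltD : rel D).
Hypothesis stoD : strict_total ltD.
Hypothesis monD : forall p q, partD p < partD q -> ltD p q.

(* [P] is partite over the sorted order [D] via [pi]: parts and order are
   inherited from [D], only points of a common fibre being ordered freely. *)
Definition partite (P : sstr n) (pi : pts P -> D) :=
  [/\ sorted_wf P, (forall x, part P x = partD (pi x)) &
      (forall x y, pi x != pi y -> prec P x y = ltD (pi x) (pi y))].

Definition over (V : finType) (pi : V -> D) (R w : rel V) : sstr n :=
  @SStr n V (fun x => partD (pi x)) R (lex_lt pi ltD w).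

Lemma over_partite (V : finType) (pi : V -> D) (R w : rel V) : strict_total w ->
  (forall x y, R x y -> partD (pi x) < partD (pi y)) -> partite (P := over pi R w) pi.
Proof.
move=> [wirr wtr wtot] Rs; split=> // [|x y /negPf e]; last by rewrite /= /lex_lt e andFb orbF.
split=> //= [|x y /monD]; last by rewrite /lex_lt => ->.
by apply: strict_total_lex => // [x y z _ _|x y _]; [apply: wtr | apply: wtot].
Qed.

Lemma partite_semb (P1 P2 : sstr n) (pi1 : pts P1 -> D) (pi2 : pts P2 -> D)
    (f : pts P1 -> pts P2) :
  partite pi1 -> partite pi2 -> (forall x, pi2 (f x) = pi1 x) -> injective f ->
  (forall x y, arc P2 (f x) (f y) = arc P1 x y) ->
  (forall x y, pi1 x = pi1 y -> prec P2 (f x) (f y) = prec P1 x y) -> semb f.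
Proof.
move=> [_ part1 prec1] [_ part2 prec2] pf fi farc fprec; split=> // [x|x y].
  by rewrite part2 part1 pf.
case: (eqVneq (pi1 x) (pi1 y)) => [/fprec //|ne].
by rewrite prec1 // prec2 !pf.
Qed.

Section PartiteLemma.
(* The partite lemma: [Q] is [A]-partite, i.e. lies over the injective copy
   [alpha] of [A] in [D]; its transversal copies of [A] are those lying over
   [alpha].  Its proof builds [C] from the words of the Hales-Jewett
   theorem over the alphabet of transversal copies of [A] in [Q]. *)
Variables (A Q : sstr n) (alpha : pts A -> D) (piQ : pts Q -> D).
Hypothesis alpha_inj : injective alpha.
Hypothesis wQ : partite piQ.
Hypothesis Q_over_A : forall q, exists a, alpha a == piQ q.

Definition transversal := {f : {ffun pts A -> pts Q} | sembb f && [forall a, piQ (f a) == alpha a]}.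

Lemma transversalP (s : transversal) : semb (val s) /\ forall a, piQ (val s a) = alpha a.
Proof. by case: s => f /= /andP[/sembP e /forallP h]; split=> // a; apply/eqP. Qed.

Definition transversal_of (f : pts A -> pts Q) (ef : semb f) (pf : forall a, piQ (f a) = alpha a) :
  transversal.
Proof.
exists [ffun a => f a]; apply/andP; split.
  by apply/sembP; apply: semb_ext ef => a; rewrite ffunE.
by apply/forallP=> a; rewrite ffunE pf.
Defined.

Definition below q := xchoose (Q_over_A q).

Lemma belowE q a : alpha a = piQ q -> below q = a.
Proof. by move=> e; apply: alpha_inj; rewrite e; apply/eqP/(xchooseP (Q_over_A q)). Qed.

Lemma below_proj q : alpha (below q) = piQ q.
Proof. exact/eqP/(xchooseP (Q_over_A q)). Qed.

Section Words.
Variables (I : finType) (t0 : I).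

Definition word (rho : {ffun I -> option transversal}) q : {ffun I -> pts Q} :=
  [ffun t => if rho t is Some s then val s (below q) else q].

Lemma word_proj rho q t : piQ (word rho q t) = piQ q.
Proof.
rewrite ffunE; case: (rho t) => // s.
by have [_ ->] := transversalP s; rewrite below_proj.
Qed.

Definition wildcard (rho : {ffun I -> option transversal}) := [exists t, rho t == None].

Definition uniform (w : {ffun I -> pts Q}) := [forall t, piQ (w t) == piQ (w t0)].
Definition uword := {w : {ffun I -> pts Q} | uniform w}.
Definition uword_proj (w : uword) := piQ (val w t0).
Definition uword_arc (w1 w2 : uword) := [exists rho, [exists q1, [exists q2,
  [&& wildcard rho, arc Q q1 q2, val w1 == word rho q1 & val w2 == word rho q2]]]].
Definition words := over uword_proj uword_arc (relpre val (word_lt (prec Q))).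

Lemma words_partite : partite (P := words) uword_proj.
Proof.
have [[sQ _ arcQ] partQ _] := wQ.
apply: over_partite => [|x y]; first exact: strict_total_pre val_inj (strict_total_word I sQ).
case/existsP=> rho /existsP[q1 /existsP[q2 /and4P[_ a12 /eqP e1 /eqP e2]]].
by rewrite /uword_proj e1 e2 !word_proj -!partQ; apply: arcQ.
Qed.

Lemma word_uniform rho q : uniform (word rho q).
Proof. by apply/forallP=> t; rewrite !word_proj. Qed.

Definition uword_of rho q : uword := exist _ (word rho q) (word_uniform rho q).

(* A point [p] of the cube yields the copy of [A] whose [a]-th word is
   [p(.) a]; on a line, these are the images of a transversal copy. *)
Lemma column_uniform (p : {ffun I -> transversal}) a : uniform [ffun t => val (p t) a].
Proof.
apply/forallP=> t; rewrite !ffunE.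
by rewrite (proj2 (transversalP (p t))) (proj2 (transversalP (p t0))).
Qed.

Definition column (p : {ffun I -> transversal}) a : uword :=
  exist _ [ffun t => val (p t) a] (column_uniform p a).

Lemma word_arc_reflect rho rho' q1 q2 q1' q2' : wildcard rho -> wildcard rho' ->
  word rho q1 = word rho' q1' -> word rho q2 = word rho' q2' -> arc Q q1' q2' -> arc Q q1 q2.
Proof.
move=> /existsP[t /eqP rt] /existsP[t' /eqP rt'] e1 e2.
pose at_ s (w : {ffun I -> pts Q}) := w s.
move: (congr1 (at_ t) e1) (congr1 (at_ t) e2) (congr1 (at_ t') e1) (congr1 (at_ t') e2).
rewrite /at_ !ffunE rt rt'; case: (rho' t) => [s'|]; last by move=> -> -> _ _.
case: (rho t') => [s|]; last by move=> _ _ -> ->.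
move=> c1 c2 c1' c2'; have [[_ arcs' _ _] ps'] := transversalP s'.
have [[_ arcs _ _] _] := transversalP s.
have b1 : below q1 = below q1' by apply: belowE; rewrite c1 ps' below_proj.
have b2 : below q2 = below q2' by apply: belowE; rewrite c2 ps' below_proj.
have -> : arc Q q1 q2 = arc A (below q1') (below q2') by rewrite c1 c2 arcs'.
by rewrite -b1 -b2 -c1' -c2' arcs.
Qed.

Lemma word_inj rho : wildcard rho -> injective (word rho).
Proof.
case/existsP=> t /eqP rt q1 q2 /(congr1 (fun w : {ffun I -> pts Q} => w t)).
by rewrite !ffunE rt.
Qed.

Lemma word_semb rho : wildcard rho -> semb (A := Q) (B := words) (uword_of rho).
Proof.
move=> hN; have [[sQ _ _] _ _] := wQ.
apply: (partite_semb wQ words_partite) => [q|q1 q2 /(congr1 val)|q1 q2|q1 q2 e].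
- by rewrite /uword_proj /= word_proj.
- exact: word_inj.
- apply/existsP/idP => [[rho' /existsP[q1' /existsP[q2' /and4P[hN' a' /eqP e1 /eqP e2]]]]|a12].
    exact: word_arc_reflect hN hN' e1 e2 a'.
  by exists rho; apply/existsP; exists q1; apply/existsP; exists q2; rewrite hN a12 !eqxx.
- rewrite /= /lex_lt /uword_proj /= !word_proj e eqxx /=.
  have [irrD _ _] := stoD; rewrite irrD /=.
  apply: (@word_lt_diff _ _ _ _ _ q1 q2 (fun t => rho t == None) sQ); first exact/existsP.
    by move=> t /eqP rt; rewrite !ffunE rt.
  by move=> t; rewrite !ffunE; case: (rho t) => // s _; rewrite (@belowE q1 (below q2)) // below_proj e.
Qed.

End Words.

Theorem partite_lemma (K : finType) : exists C : sstr n, exists piC : pts C -> D,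
  partite piC /\ forall c : {set pts C} -> K, exists g : pts Q -> pts C,
  [/\ semb g, (forall q, piC (g q) = piQ q) &
    forall f f' : pts A -> pts Q, semb f -> semb f' -> (forall a, piQ (f a) = alpha a) ->
      (forall a, piQ (f' a) = alpha a) -> c ((g \o f) @: setT) = c ((g \o f') @: setT)].
Proof.
have [I [t0 HI]] := hales_jewett transversal K.
exists (words t0), (@uword_proj _ t0); split=> [|c]; first exact: words_partite.
have [rho [[t rt] mono]] := HI (fun p => c (column t0 p @: setT)).
have hN : wildcard rho by apply/existsP; exists t; rewrite rt.
exists (uword_of t0 rho); split=> [|q|f f' ef ef' pf pf']; first exact: word_semb.
  by rewrite /uword_proj /= word_proj.
suff col_line h (eh : semb h) (ph : forall a, piQ (h a) = alpha a) :
    (uword_of t0 rho \o h) @: setT = column t0 (line rho (transversal_of eh ph)) @: setT.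
  by rewrite (col_line f ef pf) (col_line f' ef' pf'); apply: mono.
apply: eq_imset => a; apply: val_inj; apply/ffunP=> t'; rewrite /= !ffunE.
by case: (rho t') => [s|] /=; rewrite ?ffunE // (belowE (esym (ph a))).
Qed.

End PartiteLemma.

Section Amalgamation.
(* One step of the partite construction.  [P] is partite and [alpha] an
   injective copy of [A] in [D].  [Q] is the restriction of [P] to the
   fibres over [alpha]; given a partite [C], the amalgamation glues a copy
   of [P] onto [C] along each embedding of [Q] into [C] over [D]. *)
Variables (A P : sstr n) (alpha : pts A -> D) (piP : pts P -> D).
Hypothesis wP : partite piP.

Definition on_alpha d := [exists a, alpha a == d].
Definition restr_pts := {x : pts P | on_alpha (piP x)}.
Definition restr : sstr n :=
  @SStr n restr_pts (fun q => part P (val q)) (relpre val (arc P)) (relpre val (prec P)).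
Definition restr_proj (q : restr_pts) := piP (val q).

Lemma restr_partite : partite (P := restr) restr_proj.
Proof.
have [[sP monP arcP] partP precP] := wP.
split=> [|x|x y]; [split=> [|x y|x y] | exact: partP | exact: precP].
- exact: strict_total_pre val_inj sP.
- exact: monP.
- exact: arcP.
Qed.

Lemma restr_over (q : restr_pts) : exists a, alpha a == restr_proj q.
Proof. exact/existsP/(valP q). Qed.

Variables (C : sstr n) (piC : pts C -> D).
Hypothesis wC : partite piC.

Definition gluing := {g : {ffun pts restr -> pts C} |
  sembb g && [forall q, piC (g q) == restr_proj q]}.

Lemma gluingP (g : gluing) : semb (A := restr) (val g) /\ forall q, piC (val g q) = restr_proj q.
Proof. by case: g => g /= /andP[/sembP e /forallP h]; split=> // q; apply/eqP. Qed.

Definition amalg_pts := (pts C + (gluing * pts P))%type.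
Definition amalg_proj (u : amalg_pts) := match u with inl c => piC c | inr (_, x) => piP x end.
Definition amalg_arc (u v : amalg_pts) := match u, v with
  | inl c1, inl c2 => arc C c1 c2
  | inr (g1, x1), inr (g2, x2) => (g1 == g2) && arc P x1 x2
  | inl c, inr (g, x) => [exists q, (val g q == c) && arc P (val q) x]
  | inr (g, x), inl c => [exists q, (val g q == c) && arc P x (val q)]
  end.
Definition amalg := over amalg_proj amalg_arc
  (sum_lt (prec C) (lex_lt fst (@enum_lt gluing) (relpre snd (prec P)))).

Lemma amalg_partite : partite (P := amalg) amalg_proj.
Proof.
have [[sP _ arcP] partP _] := wP; have [[sC _ arcC] partC _] := wC.
apply: over_partite => [|[c1|[g1 x1]] [c2|[g2 x2]] /=].
- exact/strict_total_sum/strict_total_prod/sP/strict_total_enum_lt.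
- by move/arcC; rewrite !partC.
- case/existsP=> q /andP[/eqP <- a]; have [_ ->] := gluingP g2.
  by rewrite /restr_proj -!partP; apply: arcP.
- case/existsP=> q /andP[/eqP <- a]; have [_ ->] := gluingP g1.
  by rewrite /restr_proj -!partP; apply: arcP.
- by case/andP=> _ /arcP; rewrite !partP.
Qed.

(* The copy of [P] glued along [g]: points of [Q] are sent into [C]. *)
Definition glue (g : gluing) (x : pts P) : amalg_pts :=
  if insub x is Some q then inl (val g q) else inr (g, x).

Lemma glue_proj g x : amalg_proj (glue g x) = piP x.
Proof. by rewrite /glue; case: insubP => [q _ <-|_] //=; have [_ ->] := gluingP g. Qed.

Lemma glue_semb g : semb (A := P) (B := amalg) (glue g).
Proof.
have [[gi garc _ gprec] _] := gluingP g.
apply: (partite_semb wP amalg_partite (glue_proj g)) => [x y|x y|x y e]; rewrite /glue.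
- case: insubP => [qx _ <-|_]; case: insubP => [qy _ <-|_] //.
  + by case=> /gi ->.
  + by case.
- case: insubP => [qx _ <-|_]; case: insubP => [qy _ <-|_] /=.
  + exact: garc.
  + apply/existsP/idP => [[q /andP[/eqP /gi ->]]|a] //.
    by exists qx; rewrite eqxx.
  + apply/existsP/idP => [[q /andP[/eqP /gi ->]]|a] //.
    by exists qy; rewrite eqxx.
  + by rewrite eqxx.
- have [irrD _ _] := stoD; rewrite /= /lex_lt /= !glue_proj e eqxx irrD /glue.
  case: insubP => [qx Jx <-|nJx]; case: insubP => [qy Jy <-|nJy] /=.
  + exact: gprec.
  + by move: nJy; rewrite -e Jx.
  + by move: nJx; rewrite e Jy.
  + by rewrite /enum_lt ltnn eqxx.
Qed.

Lemma glue_transversal g (f : pts A -> pts P) : semb f -> (forall a, piP (f a) = alpha a) ->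
  exists fQ : pts A -> restr_pts, [/\ semb (B := restr) fQ,
    (forall a, restr_proj (fQ a) = alpha a) & forall a, glue g (f a) = inl (val g (fQ a))].
Proof.
move=> ef pf; have Jf a : on_alpha (piP (f a)) by apply/existsP; exists a; rewrite pf.
exists (fun a => exist _ (f a) (Jf a)); split=> [|a|a].
- by case: ef => fi farc fpart fprec; split=> // x y /(congr1 val) /fi.
- by rewrite /restr_proj pf.
- rewrite /glue; case: insubP => [q _ e|]; last by rewrite Jf.
  by congr (inl (val g _)); apply: val_inj.
Qed.

End Amalgamation.

Section PartiteConstruction.
Variables (A : sstr n) (K : finType).

Definition good_for (s : seq {ffun pts A -> D}) (P P2 : sstr n) (piP : pts P -> D)
    (piP2 : pts P2 -> D) (c : {set pts P2} -> K) (h : pts P -> pts P2) :=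
  [/\ semb h, (forall x, piP2 (h x) = piP x) &
    forall al, al \in s -> forall f f' : pts A -> pts P, semb f -> semb f' ->
      (forall a, piP (f a) = al a) -> (forall a, piP (f' a) = al a) ->
      c ((h \o f) @: setT) = c ((h \o f') @: setT)].

(* Amalgamation step: handle the copy [al], then the rest of [s] by induction. *)
Lemma partite_step (al : {ffun pts A -> D}) (s : seq {ffun pts A -> D}) :
  injective al ->
  (forall (P : sstr n) (piP : pts P -> D), partite piP -> exists P2 (piP2 : pts P2 -> D),
     partite piP2 /\ forall c, exists h, good_for s piP piP2 c h) ->
  forall (P : sstr n) (piP : pts P -> D), partite piP -> exists P2 (piP2 : pts P2 -> D),
     partite piP2 /\ forall c, exists h, good_for (al :: s) piP piP2 c h.
Proof.
move=> ainj IH P piP wP.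
have [C [piC [wC HC]]] := partite_lemma ainj (restr_partite al wP) (@restr_over A P al piP) K.
have [P2 [piP2 [wP2 H2]]] := IH _ _ (amalg_partite al wP wC).
exists P2, piP2; split=> // c; have [h1 [eh1 ph1 m1]] := H2 c.
have [g [eg pg mg]] := HC (fun S => c ((h1 \o inl) @: S)).
have gb : sembb [ffun q => g q] && [forall q, piC ([ffun q => g q] q) == @restr_proj A P al piP q].
  apply/andP; split; last by apply/forallP=> q; rewrite ffunE pg.
  by apply/sembP; apply: semb_ext eg => q; rewrite ffunE.
pose gG : gluing al piP piC := exist _ [ffun q => g q] gb.
exists (h1 \o glue gG); split=> [|x|al0].
- exact: semb_comp (glue_semb wP wC gG) eh1.
- by rewrite /= ph1 glue_proj.
rewrite inE => /predU1P[->|ins] f f' ef ef' pf pf'; last first.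
  have eG := glue_semb wP wC gG.
  apply: (m1 al0 ins (glue gG \o f) (glue gG \o f')) => [||a|a] /=.
  - exact: semb_comp ef eG.
  - exact: semb_comp ef' eG.
  - by rewrite glue_proj pf.
  - by rewrite glue_proj pf'.
have [fQ [efQ pfQ ifQ]] := glue_transversal gG ef pf.
have [fQ' [efQ' pfQ' ifQ']] := glue_transversal gG ef' pf'.
have -> : (h1 \o glue gG \o f) @: setT = (h1 \o inl) @: ((g \o fQ) @: setT).
  by rewrite -imset_comp; apply: eq_imset => a; rewrite /= ifQ ffunE.
have -> : (h1 \o glue gG \o f') @: setT = (h1 \o inl) @: ((g \o fQ') @: setT).
  by rewrite -imset_comp; apply: eq_imset => a; rewrite /= ifQ' ffunE.
exact: mg.
Qed.

Lemma partite_construction (s : seq {ffun pts A -> D}) : (forall al, al \in s -> injective al) ->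
  forall (P : sstr n) (piP : pts P -> D), partite piP -> exists P2 (piP2 : pts P2 -> D),
  partite piP2 /\ forall c : {set pts P2} -> K, exists h, good_for s piP piP2 c h.
Proof.
elim: s => [|al s IH] inj P piP wP.
  by exists P, piP; split=> // c; exists id; split=> //; apply: semb_id.
apply: partite_step wP; first by apply: inj; rewrite mem_head.
by apply: IH => al' h; apply: inj; rewrite inE h orbT.
Qed.

End PartiteConstruction.

End Partite.

Section SortedRamsey.
Variables (n M : nat) (B : sstr n).
Hypothesis wB : sorted_wf B.
Local Notation D := ('I_n * 'I_M.+1)%type.
Local Notation baseD := (base_lt n M.+1).

Lemma base_mono (p q : D) : p.1 < q.1 -> baseD p q.
Proof. by rewrite /base_lt /lex_lt => ->. Qed.

Definition base_copy := {f : {ffun pts B -> D} |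
  [&& injectiveb f, [forall x, (f x).1 == part B x] & [forall x, forall y, baseD (f x) (f y) == prec B x y]]}.

Definition base_copy_of (beta : pts B -> D) (ob : order_emb fst baseD beta) : base_copy.
Proof.
exists [ffun x => beta x]; case: ob => bi bp bl; apply/and3P; split.
- by apply/injectiveP=> x y; rewrite !ffunE => /bi.
- by apply/forallP=> x; rewrite ffunE bp.
- by apply/forallP=> x; apply/forallP=> y; rewrite !ffunE bl.
Defined.

Lemma base_copyP (be : base_copy) : order_emb fst baseD (val be).
Proof.
case: be => f /= /and3P[/injectiveP fi /forallP fp /forallP fl]; split=> // [x|x y].
  exact/eqP.
exact/eqP/(forallP (fl x)).
Qed.

(* The disjoint union of copies of [B], one over each base copy: this is
   where the partite construction starts. *)
Definition copies_proj (u : base_copy * pts B) := val u.1 u.2.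
Definition copies := over fst baseD copies_proj (fun u v => (u.1 == v.1) && arc B u.2 v.2)
  (lex_lt fst (@enum_lt base_copy) (relpre snd (prec B))).

Lemma copies_partite : partite fst baseD (P := copies) copies_proj.
Proof.
have [sB _ arcB] := wB.
apply: (over_partite (strict_total_base n M.+1) base_mono) => [|[b1 x1] [b2 x2] /= /andP[/eqP <- /arcB]].
- exact: strict_total_prod (strict_total_enum_lt _) sB.
- by have [_ p _] := base_copyP b1; rewrite /copies_proj /= !p.
Qed.

Lemma copy_semb (be : base_copy) : semb (A := B) (B := copies) (pair be).
Proof.
have [bi bp bl] := base_copyP be; have [irr _ _] := strict_total_base n M.+1.
split=> [x y [] //|x y|x|x y] /=; first by rewrite eqxx.
  by rewrite /copies_proj /= bp.
rewrite /lex_lt /copies_proj /= bl; case: (eqVneq (val be x) (val be y)) => [/bi ->|_].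
  by rewrite /enum_lt ltnn eqxx orbb.
by rewrite orbF.
Qed.

End SortedRamsey.

Lemma semb_order_emb n (A B : sstr n) (f : pts A -> pts B) : semb f -> order_emb (part B) (prec B) f.
Proof. by case. Qed.

(* The base copies of [B] are made Ramsey by [ordered_ramsey]; the partite
   construction over all injective copies of [A] in the base order makes
   the colour of a copy of [A] depend only on its base copy. *)
Theorem sorted_ramsey n (A B : sstr n) (K : finType) : sorted_wf A -> sorted_wf B ->
  exists C : sstr n, sorted_wf C /\ forall c : {set pts C} -> K,
  exists G : pts B -> pts C, semb G /\ forall f f' : pts A -> pts B, semb f -> semb f' ->
    c ((G \o f) @: setT) = c ((G \o f') @: setT).
Proof.
move=> wA wB; have [M HM] := ordered_ramsey (option K) wA wB.
have [stoD monD] := (strict_total_base n M.+1, @base_mono n M).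
pose s := [seq al <- enum {ffun pts A -> 'I_n * 'I_M.+1} | injectiveb (al : {ffun _ -> _})].
have s_inj al : al \in s -> injective al by rewrite mem_filter => /andP[/injectiveP].
have [P2 [pi2 [wP2 H2]]] := partite_construction stoD monD K s_inj (copies_partite M wB).
exists P2; split=> [|c]; first by case: wP2.
have [h [eh ph mh]] := H2 c.
pose chi (al : {ffun pts A -> 'I_n * 'I_M.+1}) := omap (fun f : {ffun _ -> _} => c ((h \o f) @: setT))
  [pick f : {ffun pts A -> pts (copies M B)} | sembb f && [forall a, copies_proj (f a) == al a]].
have [beta [ob mono]] := HM chi.
pose G := h \o pair (base_copy_of ob).
exists G; split=> [|f f' ef ef']; first exact: semb_comp (copy_semb (base_copy_of ob)) eh.
(* the colour of a copy of [A] in [G] is read off its base copy *)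
suff chiE g : semb g -> chi [ffun a => beta (g a)] = Some (c ((G \o g) @: setT)).
  by apply: Some_inj; rewrite -!chiE //; apply: mono; apply: semb_order_emb.
move=> eg; have eF := semb_comp eg (copy_semb (base_copy_of ob)).
have al_s : [ffun a => beta (g a)] \in s.
  rewrite mem_filter mem_enum andbT; apply/injectiveP=> x y; rewrite !ffunE.
  by have [bi _ _] := ob; have [gi _ _ _] := eg; move/bi/gi.
rewrite /chi; case: pickP => [f0 /andP[/sembP ef0 /forallP pf0]|none] /=.
  congr Some; apply: (mh _ al_s) => // a; first exact/eqP.
  by rewrite /copies_proj /= !ffunE.
pose F : {ffun pts A -> pts (copies M B)} := [ffun a => (base_copy_of ob, g a)].
move: (none F); suff -> : sembb F.
  by move=> /negbT/forallPn[a]; rewrite /copies_proj !ffunE eqxx.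
by apply/sembP; apply: semb_ext eF => a; rewrite /F ffunE.
Qed.

Section Encoding.
Variables (n : nat) (n_gt0 : 0 < n).

Definition part_of (A : str n) (x : car A) : 'I_n := odflt (Ordinal n_gt0) [pick i | P A i x].

Definition to_sorted (A : str n) : sstr n :=
  @SStr n (car A) (@part_of A) (fun x y => (part_of x < part_of y) && E A x y) (lt A).

Definition sorted_edge (S : sstr n) (x y : pts S) :=
  (part S x < part S y) && arc S x y || (part S y < part S x) && ~~ arc S y x.

Definition of_sorted (S : sstr n) : str n :=
  @Str n (pts S) (@sorted_edge S) (fun i x => part S x == i) (prec S).

Section InK.
Variables (A : str n) (KA : inK A).

Lemma part_ofP i (x : car A) : P A i x = (part_of x == i).
Proof.
have [_ [_ [nref [_ [_ [disj [_ [pof _]]]]]]]] := KA.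
have Px : P A (part_of x) x.
  rewrite /part_of; case: pickP => [i' //|none].
  by have [i' hi] := pof x; move: (none i'); rewrite (hi x) nref.
apply/idP/eqP=> [h|<- //]; apply/eqP; apply: contraTT h => ne.
exact: disj ne Px.
Qed.

Lemma nonadj_part (x y : car A) : nonadj x y = (part_of x == part_of y).
Proof.
have [_ [_ [nref [_ [_ [_ [_ [pof _]]]]]]]] := KA.
have [i hi] := pof x; have Pix : P A i x by rewrite (hi x) nref.
by rewrite -hi part_ofP eq_sym; move: Pix; rewrite part_ofP => /eqP ->.
Qed.

Lemma sorted_edge_to_sorted (x y : car A) : E A x y = sorted_edge (S := to_sorted A) x y.
Proof.
have [irr [asym _]] := KA; rewrite /sorted_edge /=.
case: (ltngtP (part_of x) (part_of y)) => h /=; first by rewrite orbF.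
  have : ~~ nonadj x y by rewrite nonadj_part neq_ltn h orbT.
  rewrite /nonadj negb_or negb_and !negbK => /andP[_ /orP[h'|h']].
    by rewrite h' (negbTE (asym _ _ h')).
  by rewrite h'; apply/negbTE/asym.
have : nonadj x y by rewrite nonadj_part; apply/eqP/val_inj.
by rewrite /nonadj => /orP[/eqP ->|/andP[/negbTE ->]] //; apply/negbTE.
Qed.

Lemma to_sorted_wf : sorted_wf (to_sorted A).
Proof.
have [_ [_ [_ [_ [_ [_ [_ [_ [ltirr [lttr [lttot conv]]]]]]]]]]] := KA.
split=> /= [|x y h|x y /andP[] //].
  by split=> [x|y x z h1 h2|x y]; [apply/negbTE/ltirr | apply: lttr h1 h2 | apply: lttot].
by apply: conv h _ _; rewrite part_ofP.
Qed.

End InK.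

Lemma of_sorted_inK (S : sstr n) : sorted_wf S -> inK (of_sorted S).
Proof.
case=> [[irr tr tot] mon arcs].
have naE (x y : pts S) : nonadj (A := of_sorted S) x y = (part S x == part S y).
  rewrite /nonadj /= /sorted_edge; case: (ltngtP (part S x) (part S y)) => h /=.
  - have -> : (x == y) = false by apply: contraTF h => /eqP ->; rewrite ltnn.
    have -> : (part S x == part S y) = false by apply: contraTF h => /eqP ->; rewrite ltnn.
    by case: (arc S x y).
  - have -> : (x == y) = false by apply: contraTF h => /eqP ->; rewrite ltnn.
    have -> : (part S x == part S y) = false by apply: contraTF h => /eqP ->; rewrite ltnn.
    by case: (arc S y x).
  - by rewrite orbT; apply/esym/eqP/val_inj.
split; first by move=> x; rewrite /= /sorted_edge ltnn.
split.
  by move=> x y; rewrite /= /sorted_edge; case: ltngtP => //= _; rewrite orbF ?negbK.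
split; first by move=> x; rewrite naE.
split; first by move=> x y; rewrite !naE eq_sym.
split; first by move=> x y z; rewrite !naE => /eqP -> /eqP ->.
split; first by move=> i j x ij /= /eqP ->.
split.
  move=> i; case: (pickP (fun x => part S x == i)) => [x /eqP hx|none].
    by right; exists x => y /=; rewrite naE hx eq_sym.
  by left=> x /=; rewrite none.
split; first by move=> x; exists (part S x) => y /=; rewrite naE eq_sym.
split; first by move=> x /=; rewrite irr.
split; first by move=> x y z; apply: tr.
split; first exact: tot.
by move=> i j x y ij /= /eqP ex /eqP ey; apply: mon; rewrite ex ey.
Qed.

Lemma is_emb_of_sorted (S1 S2 : sstr n) (f : pts S1 -> pts S2) : sorted_wf S1 -> sorted_wf S2 ->
  is_emb (A := of_sorted S1) (B := of_sorted S2) f <-> semb f.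
Proof.
move=> [_ _ arc1] [_ _ arc2]; split=> [[fi [fe [fp fl]]]|[fi fa fp fl]]; last first.
  by split=> //; split=> [x y|]; [rewrite /= /sorted_edge !fa !fp | split=> // j x; rewrite /= fp].
have fp' x : part S2 (f x) = part S1 x by move: (fp (part S1 x) x) => /=; rewrite eqxx => /eqP.
split=> // x y; move: (fe x y); rewrite /= /sorted_edge !fp'.
case: (ltngtP (part S1 x) (part S1 y)) => h //=; rewrite ?orbF // => _.
- have a1 : arc S1 x y = false by apply/negP=> /arc1; rewrite ltnNge ltnW.
  by rewrite a1; apply/negP=> /arc2; rewrite !fp' ltnNge ltnW.
- have a1 : arc S1 x y = false by apply/negP=> /arc1; rewrite h ltnn.
  by rewrite a1; apply/negP=> /arc2; rewrite !fp' h ltnn.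
Qed.

Lemma is_emb_sorted (A : str n) (S : sstr n) (f : car A -> pts S) : inK A -> sorted_wf S ->
  is_emb (B := of_sorted S) f <-> semb (A := to_sorted A) f.
Proof.
move=> KA wS; rewrite -is_emb_of_sorted //; last exact: to_sorted_wf.
by split=> [] [fi [fe [fp fl]]]; split=> //; split=> [x y|];
  rewrite ?fe ?(sorted_edge_to_sorted KA) //; split=> // j x; rewrite fp /= part_ofP // eq_sym.
Qed.

End Encoding.

Lemma semb_factor_image n (A B C : sstr n) (G : pts B -> pts C) (f : pts A -> pts C) :
  semb G -> semb f -> f @: setT \subset G @: setT ->
  exists f' : pts A -> pts B, semb f' /\ G \o f' =1 f.
Proof.
move=> eG ef sub; have ex a : exists b, G b == f a.
  by have /(subsetP sub)/imsetP[b _ ->] := imset_f f (in_setT a); exists b.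
have Gf a : G (xchoose (ex a)) = f a := eqP (xchooseP (ex a)).
by exists (fun a => xchoose (ex a)); split=> //; apply: semb_factor eG ef Gf.
Qed.

Lemma constant_colour (T : Type) k (Q1 Q2 : T -> Prop) (c : T -> 'I_k.+1) :
  (forall x y, Q1 x -> Q2 x -> Q1 y -> Q2 y -> c x = c y) ->
  exists col, forall x, Q1 x -> Q2 x -> c x = col.
Proof.
case: (classic (exists x, Q1 x /\ Q2 x)) => [[x [Q1x Q2x]] H|none _].
  by exists (c x) => y Q1y Q2y; apply: H.
by exists ord0 => x Q1x Q2x; case: none; exists x.
Qed.

Lemma copy_in_image n (n_gt0 : 0 < n) (A : str n) (B C : sstr n) (G : pts B -> pts C)
    (S : {set pts C}) :
  inK A -> sorted_wf C -> semb G -> S \subset G @: setT -> copy (C := of_sorted C) A S ->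
  exists f : pts (to_sorted n_gt0 A) -> pts B, semb f /\ S = (G \o f) @: setT.
Proof.
move=> KA wC eG sub [f [/is_emb_sorted ef fS]].
have sub' : f @: setT \subset G @: setT by rewrite fS.
have [f' [ef' Gf']] := semb_factor_image eG (ef n_gt0 KA wC) sub'.
by exists f'; split=> //; rewrite -fS; apply: eq_imset.
Qed.

Theorem theorem8p3 (n : nat) : (0 < n)%N -> ramsey_property (@inK n).
Proof.
move=> n_gt0 [//|k] _ A B KA KB.
have wB := to_sorted_wf n_gt0 KB.
have [C [wC HC]] := sorted_ramsey 'I_k.+1 (to_sorted_wf n_gt0 KA) wB.
exists (of_sorted C); split=> [|c]; first exact: of_sorted_inK.
have [G [eG HG]] := HC c.
exists (G @: setT); split; first by exists G; split=> //; apply/(is_emb_sorted n_gt0 G KB wC).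
apply: constant_colour => S1 S2 sub1 cp1 sub2 cp2.
have [f1 [ef1 ->]] := copy_in_image n_gt0 KA wC eG sub1 cp1.
have [f2 [ef2 ->]] := copy_in_image n_gt0 KA wC eG sub2 cp2.
exact: HG.
Qed.
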